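(* Let $n\ge2$. The semigroup $(S_n,\cdot)$ does not satisfy the identity $v_n=v_n'$, where $v_n:=\bigl(x_1x_2\cdots x_{2n}\cdot x_nx_{n-1}\cdots x_1\cdot x_{n+1}x_{n+2}\cdots x_{2n}\bigr)\cdot x_1x_2\cdots x_n$ and $v_n':=\bigl(x_1x_2\cdots x_{2n}\cdot x_nx_{n-1}\cdots x_1\cdot x_{n+1}x_{n+2}\cdots x_{2n}\bigr)^2\cdot x_1x_2\cdots x_n$.
   Context: For $n\ge2$, $S_n$ is the semigroup of partial one-to-one transformations of $\{0,1,\dots,3n+2\}$ (acting on the right, composition $x(\alpha\beta)=(x\alpha)\beta$) that is the inverse semigroup (closed under composition and taking inverse partial maps) generated by $\chi:\ n\mapsto 2n+1,\ n+1\mapsto 2n+2$ and, for $i=1,\dots,n$, $\chi_i:\ i-1\mapsto i,\ n+1+i\mapsto n+i,\ 2n+1+i\mapsto 2n+2+i$ (each undefined elsewhere). *)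

From mathcomp Require Import all_boot.
Set Implicit Arguments. Unset Strict Implicit. Unset Printing Implicit Defensive.

Definition base (n : nat) := 'I_(3 * n + 2).+1.

Definition ptrans (n : nat) := {ffun base n -> option (base n)}.

(* Composition acting on the right: x (a b) = (x a) b. *)
Definition pcomp n (a b : ptrans n) : ptrans n := [ffun x => obind b (a x)].

(* Inverse partial map (for one-to-one partial maps this is the usual inverse). *)
Definition pinv n (a : ptrans n) : ptrans n := [ffun y => [pick x | a x == Some y]].

(* Identity map, only used as the neutral start of word evaluation. *)
Definition pid n : ptrans n := [ffun x => Some x].

Definition mkmap n (s : seq (nat * nat)) : ptrans n :=
  [ffun x : base n => omap (fun y => inord y : base n)
                       (ohead [seq p.2 | p <- s & p.1 == val x])].

Definition chi n : ptrans n := mkmap n [:: (n, 2 * n + 1); (n + 1, 2 * n + 2)].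

Definition chi_i n (i : nat) : ptrans n :=
  mkmap n [:: (i - 1, i); (n + 1 + i, n + i); (2 * n + 1 + i, 2 * n + 2 + i)].

Inductive inS (n : nat) : ptrans n -> Prop :=
  | inS_chi : inS (chi n)
  | inS_chi_i : forall i, 1 <= i <= n -> inS (chi_i n i)
  | inS_comp : forall a b, inS a -> inS b -> inS (pcomp a b)
  | inS_inv : forall a, inS a -> inS (pinv a).

Definition evalw n (x : nat -> ptrans n) (w : seq nat) : ptrans n :=
  foldl (fun acc i => pcomp acc (x i)) (pid n) w.

Definition u_word (n : nat) : seq nat :=
  iota 1 (2 * n) ++ rev (iota 1 n) ++ iota (n + 1) n.

Definition v_word (n : nat) : seq nat := u_word n ++ iota 1 n.
Definition v'_word (n : nat) : seq nat := u_word n ++ u_word n ++ iota 1 n.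

(* Substitute x_i := chi_i for i <= n, x_(n+1) := chi and x_j := chi^-1 chi (the
   identity on the image {2n+1, 2n+2} of chi) for j > n+1, and follow the point 0.
   The block x_(n+1) ... x_(2n) then acts as chi, so u_n sends 0 along
   0 -> n -> 2n+1 -> n+1 -> 2n+2, and the final x_1 ... x_n of v_n carries 2n+2 to
   3n+2.  In v_n' the second u_n also carries 2n+2 to 3n+2 and then applies chi,
   which is undefined there: v_n is defined at 0 while v_n' is not. *)

From Pilot Require Import Defs.
From mathcomp Require Import all_boot zify.
Set Implicit Arguments. Unset Strict Implicit. Unset Printing Implicit Defensive.

Definition run n (x : nat -> ptrans n) (w : seq nat) (o : option (base n)) :=
  foldl (fun o i => obind (x i) o) o w.

Section Runs.
Variables (n : nat) (x : nat -> ptrans n).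

Lemma evalwE w p : evalw x w p = run x w (Some p).
Proof.
suff runE (a : ptrans n) :
    foldl (fun (acc : ptrans n) i => Defs.pcomp acc (x i)) a w p = run x w (a p).
  by rewrite /evalw runE ffunE.
by elim: w a => [|i w IHw] a //=; rewrite IHw ffunE.
Qed.

Lemma run_cat w1 w2 o : run x (w1 ++ w2) o = run x w2 (run x w1 o).
Proof. exact: foldl_cat. Qed.

Lemma run_None w : run x w None = None.
Proof. by elim: w. Qed.

Lemma run_iota_chain a m (f : nat -> base n) :
  (forall k, k < m -> x (a + k) (f k) = Some (f k.+1)) ->
  run x (iota a m) (Some (f 0)) = Some (f m).
Proof.
elim: m => [|m IHm] // step.
rewrite -[m.+1]addn1 iotaD run_cat IHm => [|k lt_km]; last by apply: step; lia.
by rewrite /= step // addn1.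
Qed.

Lemma run_rev_iota_chain a m (f : nat -> base n) :
  (forall k, k < m -> x (a + k) (f k.+1) = Some (f k)) ->
  run x (rev (iota a m)) (Some (f m)) = Some (f 0).
Proof.
elim: m => [|m IHm] // step.
rewrite -[m.+1]addn1 iotaD rev_cat /= addn1 step //; apply: IHm => k lt_km; apply: step; lia.
Qed.

End Runs.

Lemma pcomp_pinv_image n (a : ptrans n) y z :
  a z = Some y -> Defs.pcomp (pinv a) a y = Some y.
Proof.
move=> azy; rewrite !ffunE; case: pickP => [w /eqP // | no_preimage].
by move: (no_preimage z); rewrite azy eqxx.
Qed.

Lemma mkmap_inord n s a : a <= 3 * n + 2 ->
  mkmap n s (inord a) = omap inord (ohead [seq p.2 | p <- s & p.1 == a]).
Proof. by move=> le_a; rewrite ffunE /= inordK //; lia. Qed.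

Section Generators.
Variables (n i : nat).
Hypothesis lt_in : i < n.

Lemma chi_i_low : chi_i n i.+1 (inord i) = Some (inord i.+1).
Proof. by rewrite mkmap_inord /= ?subn1 ?eqxx //; lia. Qed.

Lemma chi_i_mid : chi_i n i.+1 (inord (n + 1 + i.+1)) = Some (inord (n + 1 + i)).
Proof.
rewrite mkmap_inord /=; last lia.
case: eqP => [|_]; first lia.
by rewrite eqxx /= (_ : n + i.+1 = n + 1 + i) //; lia.
Qed.

Lemma chi_i_high : chi_i n i.+1 (inord (2 * n + 2 + i)) = Some (inord (2 * n + 2 + i.+1)).
Proof.
rewrite mkmap_inord /=; last lia.
do 2 (case: eqP => [|_]; first lia).
by case: eqP => //; lia.
Qed.

End Generators.

Section Chi.
Variable n : nat.

Lemma chi_left : chi n (inord n) = Some (inord (2 * n + 1)).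
Proof. by rewrite mkmap_inord /= ?eqxx //; lia. Qed.

Lemma chi_right : chi n (inord (n + 1)) = Some (inord (2 * n + 2)).
Proof.
rewrite mkmap_inord /=; last lia.
by case: eqP => [|_]; [lia | rewrite eqxx].
Qed.

Lemma chi_last : 1 <= n -> chi n (inord (3 * n + 2)) = None.
Proof. by move=> n_gt0; rewrite mkmap_inord //=; do 2 (case: eqP => [|_]; first lia). Qed.

End Chi.

Definition witness n (i : nat) : ptrans n :=
  if i <= n then chi_i n i
  else if i == n.+1 then chi n
  else Defs.pcomp (pinv (chi n)) (chi n).

Lemma u_wordE n :
  u_word n = iota 1 n ++ iota (n + 1) n ++ rev (iota 1 n) ++ iota (n + 1) n.
Proof. by rewrite /u_word mul2n -addnn iotaD add1n addn1 -!catA. Qed.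

Section Witness.
Variable n : nat.

Lemma witness_inS i : 0 < i -> inS (witness n i).
Proof.
rewrite /witness; case: ifP => [le_in i_gt0|_ _]; first by apply: inS_chi_i; lia.
case: ifP => _; first exact: inS_chi.
by apply: inS_comp; [apply: inS_inv|]; exact: inS_chi.
Qed.

Lemma run_witness_low_up : run (witness n) (iota 1 n) (Some (inord 0)) = Some (inord n).
Proof.
rewrite (@run_iota_chain n (witness n) 1 n (fun k => inord k : base n)) // => k lt_kn.
by rewrite /witness add1n ifT // chi_i_low.
Qed.

Lemma run_witness_high_up :
  run (witness n) (iota 1 n) (Some (inord (2 * n + 2))) = Some (inord (3 * n + 2)).
Proof.
rewrite -[2 * n + 2]addn0 (@run_iota_chain n (witness n) 1 n
  (fun k => inord (2 * n + 2 + k) : base n)) => [|k lt_kn].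
  by do 2 f_equal; lia.
by rewrite /witness add1n ifT // chi_i_high.
Qed.

Lemma run_witness_down :
  run (witness n) (rev (iota 1 n)) (Some (inord (2 * n + 1))) = Some (inord (n + 1)).
Proof.
rewrite (_ : 2 * n + 1 = n + 1 + n); last lia.
rewrite -{2}[n + 1]addn0 (@run_rev_iota_chain n (witness n) 1 n
  (fun k => inord (n + 1 + k) : base n)) // => k lt_kn.
by rewrite /witness add1n ifT // chi_i_mid.
Qed.

Lemma witness_chi : witness n n.+1 = chi n.
Proof. by rewrite /witness ltnn eqxx. Qed.

Lemma witness_idem j : n.+1 < j -> witness n j = Defs.pcomp (pinv (chi n)) (chi n).
Proof. by move=> lt_j; rewrite /witness !ifF //; lia. Qed.

Hypothesis n_gt0 : 0 < n.

Lemma run_witness_tail p : run (witness n) (iota (n + 1) n) (Some p) = chi n p.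
Proof.
have -> : iota (n + 1) n = n.+1 :: iota n.+2 (n - 1).
  by rewrite -{2}(subnKC n_gt0) /= addn1.
rewrite /= witness_chi.
case chi_p : (chi n p) => [q|] /=; last exact: run_None.
rewrite (@run_iota_chain n (witness n) n.+2 (n - 1) (fun _ => q)) // => k _.
by rewrite witness_idem ?(pcomp_pinv_image chi_p) //; lia.
Qed.

Lemma run_witness_u_origin :
  run (witness n) (u_word n) (Some (inord 0)) = Some (inord (2 * n + 2)).
Proof.
rewrite u_wordE !run_cat run_witness_low_up run_witness_tail chi_left.
by rewrite run_witness_down run_witness_tail chi_right.
Qed.

Lemma run_witness_u_undefined :
  run (witness n) (u_word n) (Some (inord (2 * n + 2))) = None.
Proof.
by rewrite u_wordE !run_cat run_witness_high_up run_witness_tail chi_last // !run_None.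
Qed.

End Witness.

Theorem proposition5p3 (n : nat) (hn : 2 <= n) :
  ~ (forall x : nat -> ptrans n,
       (forall i, 1 <= i <= 2 * n -> @inS n (x i)) ->
       @evalw n x (v_word n) = @evalw n x (v'_word n)).
Proof.
have n_gt0 : 0 < n by apply: leq_trans hn.
have witness_gens i : 1 <= i <= 2 * n -> inS (witness n i).
  by case/andP=> i_gt0 _; exact: witness_inS.
move=> /(_ (witness n) witness_gens).
move=> /(congr1 (fun f : ptrans n => f (inord 0))) /=.
rewrite !evalwE /v_word /v'_word !(run_cat _ (u_word n)) run_witness_u_origin //.
by rewrite run_witness_high_up run_witness_u_undefined // run_None.
Qed.
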